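(* Let $H$ be a strong symplectic Hilbert space with signature $(n_+,n_-)$ and let $W\subseteq H$ be a maximal positive-definite subspace. If $n_+<\infty$ or $n_-<\infty$, then $W$ is maximally completely positive-definite.
   Context: All Hilbert spaces are complex and separable. A strong symplectic structure on a Hilbert space $H$ is a continuous sesquilinear form $[\cdot,\cdot]$ (linear in the first, conjugate-linear in the second variable) with $[y,x]=-\overline{[x,y]}$, non-degenerate, and such that $x\mapsto[\cdot,x]$ maps $H$ onto its dual. For $L\subseteq H$, $L^{\perp_s}=\{x:[x,y]=0\ \forall y\in L\}$. A closed subspace $L\subseteq H$ is maximal positive-definite if $-i[x,x]>0$ for every $0\ne x\in L$ and $L$ is not properly contained in a subspace with the same property; it is maximally completely positive-definite if moreover there is $c_L>0$ with $-i[x,x]\ge c_L\|x\|^2$ for all $x\in L$. If $L$ is maximally completely positive-definite then $H=L\oplus L^{\perp_s}$ (topological direct sum), and the numbers $n_+=\dim L$, $n_-=\dim L^{\perp_s}$ do not depend on the choice of $L$; $(n_+,n_-)$ is the signature of $H$ (the signature of the Hermitian form $-i[\cdot,\cdot]$). *)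

From HB Require Import structures.
From mathcomp Require Import all_boot all_order all_algebra.
From mathcomp Require Import reals.
From mathcomp Require Import complex.
Set Implicit Arguments.
Unset Strict Implicit.
Unset Printing Implicit Defensive.
Import Order.TTheory GRing.Theory Num.Theory.
Local Open Scope ring_scope.

Definition iC {R : realType} : R[i] := Complex 0 1.
Definition RtoC {R : realType} (r : R) : R[i] := Complex r 0.
Definition cabs {R : realType} (z : R[i]) : R :=
  Num.sqrt (complex.Re z ^+ 2 + complex.Im z ^+ 2).

Definition is_inner_product {R : realType} {V : lmodType R[i]}
  (ip : V -> V -> R[i]) : Prop :=
  [/\ forall (a : R[i]) (x y z : V), ip (a *: x + y) z = a * ip x z + ip y z,
      forall x y : V, ip y x = Num.conj (ip x y)
    & forall x : V, x != 0 -> 0 < ip x x].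

Definition hnorm {R : realType} {V : lmodType R[i]}
  (ip : V -> V -> R[i]) (x : V) : R := Num.sqrt (complex.Re (ip x x)).

Definition hconverges {R : realType} {V : lmodType R[i]}
  (ip : V -> V -> R[i]) (u : nat -> V) (l : V) : Prop :=
  forall e : R, 0 < e -> exists N : nat, forall n : nat, (N <= n)%N ->
    hnorm ip (u n - l) < e.

Definition hcauchy {R : realType} {V : lmodType R[i]}
  (ip : V -> V -> R[i]) (u : nat -> V) : Prop :=
  forall e : R, 0 < e -> exists N : nat, forall m n : nat, (N <= m)%N -> (N <= n)%N ->
    hnorm ip (u m - u n) < e.

Definition is_hilbert {R : realType} {V : lmodType R[i]}
  (ip : V -> V -> R[i]) : Prop :=
  [/\ is_inner_product ip,
      (forall u : nat -> V, hcauchy ip u -> exists l : V, hconverges ip u l)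
    & (exists d : nat -> V, forall (x : V) (e : R), 0 < e ->
         exists n : nat, hnorm ip (x - d n) < e)].

Definition hcontinuous_fun {R : realType} {V : lmodType R[i]}
  (ip : V -> V -> R[i]) (f : V -> R[i]) : Prop :=
  forall (x : V) (e : R), 0 < e -> exists2 d : R, 0 < d &
    forall y : V, hnorm ip (y - x) < d -> cabs (f y - f x) < e.

Definition hcontinuous_form {R : realType} {V : lmodType R[i]}
  (ip : V -> V -> R[i]) (s : V -> V -> R[i]) : Prop :=
  forall (x y : V) (e : R), 0 < e -> exists2 d : R, 0 < d &
    forall x' y' : V, hnorm ip (x' - x) < d -> hnorm ip (y' - y) < d ->
      cabs (s x' y' - s x y) < e.

Definition clinear {R : realType} {V : lmodType R[i]} (f : V -> R[i]) : Prop :=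
  forall (a : R[i]) (x y : V), f (a *: x + y) = a * f x + f y.

Definition strong_symplectic {R : realType} {V : lmodType R[i]}
  (ip : V -> V -> R[i]) (s : V -> V -> R[i]) : Prop :=
  [/\ (forall (a : R[i]) (x y z : V), s (a *: x + y) z = a * s x z + s y z) /\
      (forall (a : R[i]) (x y z : V), s z (a *: x + y) = Num.conj a * s z x + s z y),
      forall x y : V, s y x = - Num.conj (s x y),
      hcontinuous_form ip s,
      forall x : V, (forall y : V, s x y = 0) -> x = 0
    & forall f : V -> R[i], clinear f -> hcontinuous_fun ip f ->
        exists x : V, forall y : V, f y = s y x].

Definition is_subspace {R : realType} {V : lmodType R[i]} (L : V -> Prop) : Prop :=
  L 0 /\ forall (a : R[i]) (x y : V), L x -> L y -> L (a *: x + y).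

Definition is_closed_subspace {R : realType} {V : lmodType R[i]}
  (ip : V -> V -> R[i]) (L : V -> Prop) : Prop :=
  is_subspace L /\
  forall (u : nat -> V) (l : V), (forall n, L (u n)) -> hconverges ip u l -> L l.

Definition sperp {R : realType} {V : lmodType R[i]}
  (s : V -> V -> R[i]) (L : V -> Prop) : V -> Prop :=
  fun x => forall y : V, L y -> s x y = 0.

Definition pos_def {R : realType} {V : lmodType R[i]}
  (s : V -> V -> R[i]) (L : V -> Prop) : Prop :=
  forall x : V, L x -> x != 0 -> 0 < - (iC * s x x).

Definition max_pos_def {R : realType} {V : lmodType R[i]}
  (ip : V -> V -> R[i]) (s : V -> V -> R[i]) (L : V -> Prop) : Prop :=
  [/\ is_closed_subspace ip L, pos_def s L
    & forall L' : V -> Prop, is_closed_subspace ip L' -> pos_def s L' ->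
        (forall x, L x -> L' x) -> forall x, L' x -> L x].

Definition max_compl_pos_def {R : realType} {V : lmodType R[i]}
  (ip : V -> V -> R[i]) (s : V -> V -> R[i]) (L : V -> Prop) : Prop :=
  max_pos_def ip s L /\
  exists2 c : R, 0 < c &
    forall x : V, L x -> RtoC (c * hnorm ip x ^+ 2) <= - (iC * s x x).

Definition finite_dim {R : realType} {V : lmodType R[i]} (L : V -> Prop) : Prop :=
  exists (n : nat) (v : 'I_n -> V), forall x : V, L x ->
    exists a : 'I_n -> R[i], x = \sum_(i < n) a i *: v i.

From HB Require Import structures.
From mathcomp Require Import all_boot all_order all_algebra.
From mathcomp Require Import reals complex.
From mathcomp Require Import ring lra.
From mathcomp Require boolp.
Import Order.TTheory GRing.Theory Num.Theory.
Set Implicit Arguments.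
Unset Strict Implicit.
Unset Printing Implicit Defensive.
Local Open Scope complex_scope.
Local Open Scope ring_scope.

(* Write B(x, y) = -i[x, y]; a closed subspace is maximally completely
   positive-definite iff it is maximal positive-definite and B is coercive on it,
   B(x, x) >= c |x|^2.  Two facts drive the proof.  On the symplectic complement of
   a maximal positive-definite L the form B is <= 0, since otherwise L + Cy would be
   a larger closed positive-definite subspace.  And a finite-dimensional subspace on
   which B is positive-definite is coercive (Gram-Schmidt with respect to B).
   If L is spanned by v_1, ..., v_n, the functionals [., v_i] are jointly injective
   on W, because their common kernel lies in the complement of L where B <= 0; so W
   is finite-dimensional.  If L^{perp_s} is spanned by v_1, ..., v_m, the Riesz
   property of a strong symplectic form gives L^{perp_s perp_s} = L, so the common
   kernel of the [., v_i] lies in L.  Then K = W ∩ L is coercive, hence B-complete,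
   and the projection theorem splits W into K and its B-orthogonal complement in W,
   on which the [., v_i] are jointly injective.  Both summands are coercive
   and B-orthogonal, so W is coercive. *)

Definition cnorm2 {R : realType} (w : R[i]) : R :=
  complex.Re w ^+ 2 + complex.Im w ^+ 2.

Section ComplexNorm.
Variable R : realType.
Implicit Types w z : R[i].

Lemma cnorm2_ge0 w : 0 <= cnorm2 w.
Proof. by rewrite addr_ge0 ?sqr_ge0. Qed.

Lemma cnorm2M w z : cnorm2 (w * z) = cnorm2 w * cnorm2 z.
Proof. by case: w => a b; case: z => c d; rewrite /cnorm2 /=; ring. Qed.

Lemma cnorm2_eq0 w : cnorm2 w = 0 -> w = 0.
Proof.
case: w => a b; rewrite /cnorm2 /= => h.
have /eqP : a ^+ 2 = 0 by have := sqr_ge0 b; have := sqr_ge0 a; lra.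
have /eqP : b ^+ 2 = 0 by have := sqr_ge0 b; have := sqr_ge0 a; lra.
by rewrite !sqrf_eq0 => /eqP -> /eqP ->.
Qed.

Lemma cabs_lt w (e : R) : 0 < e -> (cabs w < e) = (cnorm2 w < e ^+ 2).
Proof.
by move=> e0; rewrite /cabs -{1}(gtr0_norm e0) -sqrtr_sqr ltr_sqrt ?exprn_gt0.
Qed.

Lemma Im_le_cabs w : complex.Im w <= cabs w.
Proof.
rewrite /cabs; apply: (le_trans (ler_norm _)).
by rewrite -sqrtr_sqr ler_sqrt ?lerDr ?sqr_ge0 // addr_ge0 ?sqr_ge0.
Qed.

End ComplexNorm.

Section RealFacts.
Variable R : realType.

Lemma sqr_le_of_quadratic_ge0 (A b C : R) :
  (forall r : R, 0 <= A + r ^+ 2 * C + 2 * r * b) -> 0 <= C -> b ^+ 2 <= A * C.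
Proof.
move=> H C0; have A0 : 0 <= A by have := H 0; rewrite expr0n /=; lra.
case: (ltgtP C 0) C0 => // [C_gt0|C_eq0] _.
  have := H (- b / C); set r := - b / C => hr.
  have rC : r * C = - b by rewrite /r mulfVK // gt_eqF.
  have := mulr_ge0 (ltW C_gt0) hr; nra.
case: (b =P 0) => [->|/eqP b_neq0]; first by rewrite expr0n /= C_eq0 mulr0.
have := H (- (A + 1) / (2 * b)); set r := - (A + 1) / (2 * b).
have : r * (2 * b) = - (A + 1) by rewrite /r mulfVK // mulf_neq0 // pnatr_eq0.
rewrite C_eq0; nra.
Qed.

Lemma le0_of_le_scaled (a c : R) :
  0 <= c -> (forall e, 0 < e -> a <= c * e) -> a <= 0.
Proof.
move=> c0 h; rewrite leNgt; apply/negP => a0.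
have c1 : 0 < c + 1 by lra.
have := h (a / (c + 1)) (divr_gt0 a0 c1).
have -> : c * (a / (c + 1)) = a - a / (c + 1) by field; rewrite gt_eqF.
by have := divr_gt0 a0 c1; lra.
Qed.

Definition vanishes (X : nat -> R) : Prop :=
  forall e : R, 0 < e -> exists N : nat, forall n : nat, (N <= n)%N -> X n < e.

Lemma vanishes_le (X Y : nat -> R) :
  (forall n, X n <= Y n) -> vanishes Y -> vanishes X.
Proof.
by move=> XY Y0 e /Y0 [N YN]; exists N => n /YN; apply: le_lt_trans (XY n).
Qed.

Lemma vanishesD (X Y : nat -> R) :
  vanishes X -> vanishes Y -> vanishes (fun n => X n + Y n).
Proof.
move=> X0 Y0 e e0; have e2 : 0 < e / 2 by rewrite divr_gt0.
have [[N1 XN] [N2 YN]] := (X0 _ e2, Y0 _ e2).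
exists (N1 + N2)%N => n leNn; have := XN n (leq_trans (leq_addr _ _) leNn).
by have := YN n (leq_trans (leq_addl _ _) leNn); lra.
Qed.

Lemma vanishesMr (X : nat -> R) (K : R) :
  0 <= K -> vanishes X -> vanishes (fun n => X n * K).
Proof.
move=> K0 X0 e e0; have K1 : 0 < K + 1 by lra.
have [N XN] := X0 _ (divr_gt0 e0 K1); exists N => n /XN XNn.
apply: le_lt_trans (ler_wpM2r K0 (ltW XNn)) _.
by rewrite mulrAC ltr_pdivrMr // ltr_pM2l //; lra.
Qed.

Lemma vanishes_inv_succ : vanishes (fun n => n.+1%:R^-1).
Proof.
move=> e e0; exists (Num.Def.archi_bound e^-1) => n leNn.
have e'0 : 0 < e^-1 by rewrite invr_gt0.
have ltNn : e^-1 < n.+1%:R.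
  by apply: lt_le_trans (archi_boundP (ltW e'0)) _; rewrite ler_nat leqW.
by rewrite -[e]invrK ltf_pV2 ?posrE ?ltr0n.
Qed.

End RealFacts.

Section HermitianForm.
Variables (R : realType) (V : lmodType R[i]).

Definition hermitian_form (F : V -> V -> R[i]) : Prop :=
  (forall a x y z, F (a *: x + y) z = a * F x z + F y z) /\
  (forall x y, F y x = Num.conj (F x y)).

Definition qform (F : V -> V -> R[i]) (x : V) : R := complex.Re (F x x).

Variables (F : V -> V -> R[i]) (HF : hermitian_form F).

Lemma hformDl x y z : F (x + y) z = F x z + F y z.
Proof. by rewrite -[x]scale1r HF.1 mul1r scale1r. Qed.

Lemma hform0l z : F 0 z = 0.
Proof. by apply: (addrI (F 0 z)); rewrite -hformDl !addr0. Qed.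

Lemma hformZl a x z : F (a *: x) z = a * F x z.
Proof. by rewrite -[a *: x]addr0 HF.1 hform0l addr0. Qed.

Lemma hformNl x z : F (- x) z = - F x z.
Proof. by rewrite -scaleN1r hformZl mulN1r. Qed.

Lemma hformBl x y z : F (x - y) z = F x z - F y z.
Proof. by rewrite hformDl hformNl. Qed.

Lemma hformDr x y z : F z (x + y) = F z x + F z y.
Proof. by rewrite [LHS]HF.2 [F z x]HF.2 [F z y]HF.2 hformDl rmorphD. Qed.

Lemma hformZr a x z : F z (a *: x) = Num.conj a * F z x.
Proof. by rewrite [LHS]HF.2 [F z x]HF.2 hformZl rmorphM. Qed.

Lemma hformNr x z : F z (- x) = - F z x.
Proof. by rewrite [LHS]HF.2 [F z x]HF.2 hformNl rmorphN. Qed.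

Lemma hform_diag x : F x x = (qform F x)%:C.
Proof.
have /(congr1 (@complex.Im R)) := HF.2 x x.
by rewrite /qform; case: (F x x) => a b /= h; congr (_ +i* _); lra.
Qed.

Lemma hform_diag_neq0 x : 0 < qform F x -> F x x != 0.
Proof.
by rewrite hform_diag => qx; apply: contraTneq qx => /(congr1 (@complex.Re R)) /= ->; rewrite ltxx.
Qed.

Lemma Re_hformC x y : complex.Re (F y x) = complex.Re (F x y).
Proof. by rewrite HF.2; case: (F x y). Qed.

Lemma Re_hform_iZr x y : complex.Re (F x ('i *: y)) = complex.Im (F x y).
Proof. by rewrite hformZr; case: (F x y) => a b /=; ring. Qed.

Lemma Re_hformZRr x y (r : R) :
  complex.Re (F x (r%:C *: y)) = r * complex.Re (F x y).
Proof. by rewrite hformZr; case: (F x y) => a b /=; ring. Qed.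

Lemma qform0 : qform F 0 = 0.
Proof. by rewrite /qform hform0l. Qed.

Lemma qformD x y : qform F (x + y) = qform F x + qform F y + 2 * complex.Re (F x y).
Proof. by rewrite /qform hformDl !hformDr !raddfD /= Re_hformC; ring. Qed.

Lemma qformN x : qform F (- x) = qform F x.
Proof. by rewrite /qform hformNl hformNr opprK. Qed.

Lemma qformB x y : qform F (x - y) = qform F x + qform F y - 2 * complex.Re (F x y).
Proof. by rewrite qformD qformN hformNr raddfN /=; ring. Qed.

Lemma qformZ a x : qform F (a *: x) = cnorm2 a * qform F x.
Proof.
by rewrite /qform hformZl hformZr hform_diag; case: a => p q; rewrite /cnorm2 /=; ring.
Qed.

Lemma qformDZR x y (r : R) :
  qform F (x + r%:C *: y) = qform F x + r ^+ 2 * qform F y + 2 * r * complex.Re (F x y).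
Proof.
rewrite qformD qformZ Re_hformZRr mulrA; congr (_ + _ * _ + _).
by rewrite /cnorm2 /= expr0n addr0.
Qed.

Lemma qform_parallelogram x y :
  qform F (x + y) + qform F (x - y) = 2 * qform F x + 2 * qform F y.
Proof. by rewrite qformD qformB; ring. Qed.

Lemma qform_cauchy_schwarz x y :
  (forall r : R, 0 <= qform F (x + r%:C *: y)) -> 0 <= qform F y ->
  complex.Re (F x y) ^+ 2 <= qform F x * qform F y.
Proof. by move=> H y0; apply: sqr_le_of_quadratic_ge0 => // r; rewrite -qformDZR. Qed.

End HermitianForm.

Section Subspace.
Variables (R : realType) (V : lmodType R[i]).

Lemma subspaceD (S : V -> Prop) x y : is_subspace S -> S x -> S y -> S (x + y).
Proof. by move=> [_ hS] Sx Sy; rewrite -[x]scale1r; apply: hS. Qed.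

Lemma subspaceZ (S : V -> Prop) a x : is_subspace S -> S x -> S (a *: x).
Proof. by move=> [S0 hS] Sx; rewrite -[a *: x]addr0; apply: hS. Qed.

Lemma subspaceB (S : V -> Prop) x y : is_subspace S -> S x -> S y -> S (x - y).
Proof. by move=> hS Sx Sy; rewrite -scaleN1r addrC; apply: hS.2. Qed.

Lemma subspace_kernel (W : V -> Prop) (f : V -> R[i]) :
  is_subspace W -> (forall a x y, f (a *: x + y) = a * f x + f y) ->
  is_subspace (fun x => W x /\ f x = 0).
Proof.
move=> [W0 W_lin] f_lin; have f0 : f 0 = 0.
  have := f_lin 1 0 0; rewrite scale1r mul1r addr0 => h.
  by apply: (addrI (f 0)); rewrite -h addr0.
by split=> [|a x y [Wx fx] [Wy fy]]; split; rewrite ?f_lin ?fx ?fy ?mulr0 ?addr0; auto.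
Qed.

Definition line_add (L : V -> Prop) (y : V) : V -> Prop :=
  fun x => exists l t, L l /\ x = l + t *: y.

Lemma subspace_line_add (L : V -> Prop) (y : V) : is_subspace L -> is_subspace (line_add L y).
Proof.
move=> hL; split; first by exists 0, 0; rewrite scale0r addr0; split=> //; exact: hL.1.
move=> a _ _ [l1 [t1 [L1 ->]]] [l2 [t2 [L2 ->]]].
exists (a *: l1 + l2), (a * t1 + t2); split; first exact: hL.2.
by rewrite scalerDr scalerA scalerDl addrACA.
Qed.

End Subspace.

Section Projection.
Variables (R : realType) (V : lmodType R[i]).

Definition qcauchy (F : V -> V -> R[i]) (u : nat -> V) : Prop :=
  forall e : R, 0 < e -> exists N : nat, forall m n : nat, (N <= m)%N -> (N <= n)%N ->
    qform F (u m - u n) < e.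

Definition qconverges (F : V -> V -> R[i]) (u : nat -> V) (l : V) : Prop :=
  vanishes (fun n => qform F (u n - l)).

Definition qcomplete (F : V -> V -> R[i]) (S : V -> Prop) : Prop :=
  forall u : nat -> V, (forall n, S (u n)) -> qcauchy F u -> exists2 l, S l & qconverges F u l.

Variables (F : V -> V -> R[i]) (HF : hermitian_form F).
Variables (S : V -> Prop) (x : V).
Hypothesis HS : is_subspace S.
(* Positivity is only required on C x + S, so that the lemma also applies to the
   indefinite form -i[., .] on a positive-definite subspace. *)
Hypothesis qform_ge0 : forall k (t : R[i]), S k -> 0 <= qform F (t *: x + k).
Hypothesis S_complete : qcomplete F S.

Let qform_ge0_S k : S k -> 0 <= qform F k.
Proof. by move=> Sk; have := qform_ge0 0 Sk; rewrite scale0r add0r. Qed.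

Let qform_ge0_sub k : S k -> 0 <= qform F (x - k).
Proof.
by move=> Sk; have := qform_ge0 1 (subspaceZ (-1) HS Sk); rewrite scale1r scaleN1r.
Qed.

Let dist_set (r : R) : Prop := exists2 k, S k & r = qform F (x - k).

Let dist := inf dist_set.

Let has_inf_dist_set : classical_sets.has_inf dist_set.
Proof.
split; first by exists (qform F (x - 0)), 0; first exact: HS.1.
by exists 0 => r [k Sk ->]; apply: qform_ge0_sub.
Qed.

Let dist_le k : S k -> dist <= qform F (x - k).
Proof. by move=> Sk; apply: (ge_inf has_inf_dist_set.2); exists k. Qed.

Let dist_approx e : 0 < e -> exists2 k, S k & qform F (x - k) < dist + e.
Proof. by move=> /inf_adherent /(_ has_inf_dist_set) [_ [k Sk ->]]; exists k. Qed.

Let near_minimizer_orth k z e : S k -> S z -> qform F (x - k) < dist + e ->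
  complex.Re (F (x - k) z) ^+ 2 <= e * qform F z.
Proof.
move=> Sk Sz near_k; apply: sqr_le_of_quadratic_ge0 (qform_ge0_S Sz) => r.
have := dist_le (subspaceB HS Sk (subspaceZ r%:C HS Sz)).
have -> : x - (k - r%:C *: z) = x - k + r%:C *: z by rewrite opprB addrA addrAC.
by rewrite qformDZR //; lra.
Qed.

Let near_minimizers_close k1 k2 e1 e2 : S k1 -> S k2 ->
  qform F (x - k1) < dist + e1 -> qform F (x - k2) < dist + e2 ->
  qform F (k1 - k2) < 2 * e1 + 2 * e2.
Proof.
move=> Sk1 Sk2 near1 near2.
pose m := 2^-1 *: (k1 + k2).
have dist_m := dist_le (subspaceZ 2^-1 HS (subspaceD HS Sk1 Sk2)).
have := qform_parallelogram HF (x - k1) (x - k2).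
have -> : x - k1 + (x - k2) = 2 *: (x - m).
  rewrite scalerBr /m scalerA mulfV ?pnatr_eq0 // scale1r scaler_nat mulr2n.
  by rewrite opprD addrACA.
have -> : x - k1 - (x - k2) = - (k1 - k2) by rewrite opprB addrC addrA subrK opprB.
by rewrite qformZ // qformN // /cnorm2 /= /m; lra.
Qed.

Let minimizing_limit_orth (k : nat -> V) p z :
  (forall n, S (k n) /\ qform F (x - k n) < dist + n.+1%:R^-1) ->
  S p -> qconverges F k p -> S z -> complex.Re (F (x - p) z) = 0.
Proof.
move=> k_near Sp k_cvg Sz; set b := complex.Re _.
suff : b ^+ 2 <= 0 by rewrite le_eqVlt ltNge sqr_ge0 orbF sqrf_eq0 => /eqP.
apply: (@le0_of_le_scaled _ _ (4 * qform F z)); first by rewrite mulr_ge0 ?qform_ge0_S.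
move=> eta eta0.
have [N1 hN1] := vanishes_inv_succ eta0; have [N2 hN2] := k_cvg _ eta0.
pose n := (N1 + N2)%N; have [Skn near_kn] := k_near n.
set qz := qform F z; have qz0 : 0 <= qz := qform_ge0_S Sz.
set b1 := complex.Re (F (x - k n) z); set b2 := complex.Re (F (k n - p) z).
have -> : b = b1 + b2 by rewrite -raddfD -hformDl // addrA subrK.
have b1_le : b1 ^+ 2 <= eta * qz.
  apply: le_trans (near_minimizer_orth Skn Sz near_kn) _.
  by rewrite ler_wpM2r // ltW // hN1 // leq_addr.
have b2_le : b2 ^+ 2 <= eta * qz.
  apply: le_trans (ler_wpM2r qz0 (ltW (hN2 n (leq_addl _ _)))).
  apply: qform_cauchy_schwarz qz0 => // r; apply: qform_ge0_S.
  exact: subspaceD HS (subspaceB HS Skn Sp) (subspaceZ _ HS Sz).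
by have := sqr_ge0 (b1 - b2); nra.
Qed.

Lemma orthogonal_projection : exists2 p, S p & forall z, S z -> F (x - p) z = 0.
Proof.
have /boolp.choice [k k_near] :
    forall n : nat, exists k, S k /\ qform F (x - k) < dist + n.+1%:R^-1.
  move=> n; have [|k Sk near] := @dist_approx (n.+1%:R^-1); last by exists k.
  by rewrite invr_gt0 ltr0n.
have [p Sp k_cvg] : exists2 p, S p & qconverges F k p.
  apply: S_complete => [n|e e0]; first by case: (k_near n).
  have [N hN] := vanishes_inv_succ (divr_gt0 e0 (ltr0n R 4)).
  exists N => m n leNm leNn; have := hN _ leNm; have := hN _ leNn.
  have := near_minimizers_close (k_near m).1 (k_near n).1 (k_near m).2 (k_near n).2.
  by move: (m.+1%:R^-1) (n.+1%:R^-1) => a b; lra.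
have Re_orth z : S z -> complex.Re (F (x - p) z) = 0.
  exact: minimizing_limit_orth k_near Sp k_cvg.
exists p => // z Sz; have := Re_orth _ (subspaceZ 'i HS Sz).
rewrite Re_hform_iZr //; move: (Re_orth z Sz).
by case: (F (x - p) z) => a b /= -> ->.
Qed.

End Projection.

Section Span.
Variables (R : realType) (V : lmodType R[i]).

Definition in_span n (v : 'I_n -> V) (x : V) : Prop :=
  exists a : 'I_n -> R[i], x = \sum_(i < n) a i *: v i.

Definition ord_cons (T : Type) n (e : T) (g : 'I_n -> T) : 'I_n.+1 -> T :=
  fun i => if unlift ord0 i is Some j then g j else e.

Lemma in_span0 n (v : 'I_n -> V) : in_span v 0.
Proof. by exists (fun _ => 0); rewrite big1 // => i _; rewrite scale0r. Qed.

Lemma in_span_cons n (v : 'I_n -> V) e t y :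
  in_span v y -> in_span (ord_cons e v) (t *: e + y).
Proof.
move=> [a ->]; exists (ord_cons t a); rewrite big_ord_recl /ord_cons unlift_none.
by congr (_ + _); apply: eq_bigr => j _; rewrite liftK.
Qed.

Lemma raw_linear_sum (U : lmodType R[i]) (f : V -> U) n (a : 'I_n -> R[i]) v :
  (forall c x y, f (c *: x + y) = c *: f x + f y) ->
  f (\sum_(i < n) a i *: v i) = \sum_(i < n) a i *: f (v i).
Proof.
move=> f_lin; have f0 : f 0 = 0.
  have := f_lin 1 0 0; rewrite !scale1r addr0 => h.
  by apply: (addrI (f 0)); rewrite -h addr0.
by apply: (big_rec2 (fun s t => f s = t)) => // i y1 y2 _ <-.
Qed.

Lemma finite_dim_of_joint_kernel0 n (W : V -> Prop) (f : 'I_n -> V -> R[i]) :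
  is_subspace W -> (forall i a x y, f i (a *: x + y) = a * f i x + f i y) ->
  (forall x, W x -> (forall i, f i x = 0) -> x = 0) -> finite_dim W.
Proof.
elim: n W f => [|n IH] W f hW f_lin inj.
  by exists 0%N, (fun _ => 0) => x Wx; rewrite (inj x Wx) //; [apply: in_span0 | case].
have inj_tail (W' : V -> Prop) : (forall x, W' x -> W x /\ f ord0 x = 0) ->
    forall x, W' x -> (forall j, f (lift ord0 j) x = 0) -> x = 0.
  move=> W'W x /W'W [Wx f0x] fx0; apply: inj => // i.
  by case: (unliftP ord0 i) => [j ->|->].
case: (boolp.pselect (exists2 e, W e & f ord0 e != 0)) => [[e We f0e]|f0_W].
  have hW' := subspace_kernel hW (f_lin ord0).
  have [m [v v_span]] := IH _ _ hW' (fun j => f_lin (lift ord0 j)) (inj_tail _ (fun _ h => h)).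
  exists m.+1, (ord_cons e v) => x Wx.
  pose t := f ord0 x / f ord0 e.
  have -> : x = t *: e + ((- t) *: e + x) by rewrite scaleNr addNKr.
  apply/in_span_cons/v_span; split; first exact: hW.2.
  by rewrite f_lin /t mulNr mulfVK // addNr.
apply: (IH W (fun j => f (lift ord0 j))) => //; apply: inj_tail => x Wx; split=> //.
by apply/eqP/negP => /negP f0x; apply: f0_W; exists x.
Qed.

Lemma in_span_drop n (v : 'I_n.+1 -> V) (P : V -> V) (b : 'I_n.+1 -> R[i]) x :
  (forall a x y, P (a *: x + y) = a *: P x + P y) ->
  b ord0 != 0 -> P (\sum_(i < n.+1) b i *: v i) = 0 ->
  in_span v x -> in_span (fun j => P (v (lift ord0 j))) (P x).
Proof.
move=> P_lin b0 Pe [a ->]; rewrite raw_linear_sum // big_ord_recl.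
rewrite raw_linear_sum // big_ord_recl in Pe.
set w := fun j => P (v (lift ord0 j)).
have -> : P (v ord0) = - (b ord0)^-1 *: \sum_(j < n) b (lift ord0 j) *: w j.
  apply: (scalerI b0); rewrite scalerA mulrN mulfV // scaleN1r.
  by apply/eqP; rewrite -addr_eq0; apply/eqP.
exists (fun j => a (lift ord0 j) - a ord0 / b ord0 * b (lift ord0 j)).
rewrite scalerA mulrN scaleNr addrC scaler_sumr -sumrB; apply: eq_bigr => j _.
by rewrite scalerBl scalerA.
Qed.

End Span.

Section Coercivity.
Variables (R : realType) (V : lmodType R[i]) (ip B : V -> V -> R[i]).
Hypotheses (ipH : hermitian_form ip) (BH : hermitian_form B).
Hypothesis ip_gt0 : forall x, x != 0 -> 0 < qform ip x.

Definition coercive (W : V -> Prop) : Prop :=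
  exists2 c : R, 0 < c & forall x, W x -> c * qform ip x <= qform B x.

Lemma qform_ip_ge0 x : 0 <= qform ip x.
Proof. by case: (x =P 0) => [->|/eqP /ip_gt0 /ltW //]; rewrite qform0. Qed.

Lemma qform_ip_addle x y : qform ip (x + y) <= 2 * qform ip x + 2 * qform ip y.
Proof. by have := qform_parallelogram ipH x y; have := qform_ip_ge0 (x - y); lra. Qed.

Lemma subspace_sperp (W K : V -> Prop) :
  is_subspace W -> is_subspace (fun x => W x /\ sperp B K x).
Proof.
move=> [W0 W_lin]; split=> [|a x y [Wx x_orth] [Wy y_orth]].
  by split=> // k _; rewrite hform0l.
by split=> [|k Kk]; [exact: W_lin | rewrite BH.1 x_orth ?y_orth // mulr0 addr0].
Qed.

Lemma orthogonal_decomposition (W K : V -> Prop) w :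
  is_subspace W -> is_subspace K -> (forall k, K k -> W k) ->
  (forall x, W x -> 0 <= qform B x) -> qcomplete B K -> W w ->
  exists k m, [/\ K k, W m /\ sperp B K m & w = k + m].
Proof.
move=> hW hK KW W_ge0 K_complete Ww.
have [k Kk k_orth] := orthogonal_projection BH (x := w) hK
  (fun k' t Kk' => W_ge0 _ (hW.2 _ _ _ Ww (KW _ Kk'))) K_complete.
exists k, (w - k); split=> //; last by rewrite addrC subrK.
by split=> //; exact: subspaceB hW Ww (KW _ Kk).
Qed.

Lemma coercive_orthogonal_sum (W K M : V -> Prop) :
  (forall x, W x -> exists k m, [/\ K k, M m & x = k + m]) ->
  (forall k m, K k -> M m -> B k m = 0) ->
  coercive K -> coercive M -> coercive W.
Proof.
move=> W_sum KM_orth [c1 c1_gt0 K_coer] [c2 c2_gt0 M_coer].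
pose c := Num.min c1 c2 / 2.
have c_gt0 : 0 < c by rewrite divr_gt0 // lt_min c1_gt0.
have [c_le1 c_le2] : 2 * c <= c1 /\ 2 * c <= c2.
  by rewrite /c mulrC mulfVK ?pnatr_eq0 // ge_min lexx ge_min lexx orbT.
exists c => // _ /W_sum [k [m [Kk Mm ->]]].
rewrite (qformD BH) KM_orth //= mulr0 addr0.
have := K_coer _ Kk; have := M_coer _ Mm.
have := ler_wpM2l (ltW c_gt0) (qform_ip_addle k m).
have := ler_wpM2r (qform_ip_ge0 k) c_le1; have := ler_wpM2r (qform_ip_ge0 m) c_le2.
lra.
Qed.

Lemma coercive_line e : 0 < qform B e -> coercive (fun y => exists t, y = t *: e).
Proof.
move=> Be_gt0; have e_neq0 : e != 0 by apply: contraTneq Be_gt0 => ->; rewrite qform0 ?ltxx.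
exists (qform B e / qform ip e); first by rewrite divr_gt0 ?ip_gt0.
move=> _ [t ->]; rewrite !qformZ // mulrCA mulfVK ?gt_eqF ?ip_gt0 //.
Qed.

Definition proj_orth (e x : V) : V := x - (B x e / B e e) *: e.

Lemma proj_orth_linear e a x y :
  proj_orth e (a *: x + y) = a *: proj_orth e x + proj_orth e y.
Proof. by rewrite /proj_orth BH.1 mulrDl scalerDl -mulrA -scalerA scalerBr opprD addrACA. Qed.

Lemma proj_orth_id e x : B x e = 0 -> proj_orth e x = x.
Proof. by move=> Bxe; rewrite /proj_orth Bxe mul0r scale0r subr0. Qed.

Lemma proj_orth_orth e x : B e e != 0 -> B (proj_orth e x) e = 0.
Proof. by move=> Bee; rewrite /proj_orth hformBl // hformZl // mulfVK // subrr. Qed.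

Lemma proj_orth_self e : B e e != 0 -> proj_orth e e = 0.
Proof. by move=> Bee; rewrite /proj_orth mulfV // scale1r subrr. Qed.

Lemma coercive_of_coercive_kernel (W : V -> Prop) e :
  is_subspace W -> W e -> 0 < qform B e -> coercive (fun x => W x /\ B x e = 0) ->
  coercive W.
Proof.
move=> hW We Be_gt0 M_coer; have Bee := hform_diag_neq0 BH Be_gt0.
apply: (coercive_orthogonal_sum (K := fun y => exists t, y = t *: e) _ _
  (coercive_line Be_gt0) M_coer).
  move=> x Wx; exists ((B x e / B e e) *: e), (proj_orth e x); split.
  - by exists (B x e / B e e).
  - by split; [exact: subspaceB hW Wx (subspaceZ _ hW We) | exact: proj_orth_orth].
  - by rewrite /proj_orth addrC subrK.
by move=> _ m [t ->] [_ Bme]; rewrite hformZl // BH.2 Bme rmorph0 mulr0.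
Qed.

Lemma coercive_of_finite_dim (W : V -> Prop) :
  is_subspace W -> (forall x, W x -> x != 0 -> 0 < qform B x) -> finite_dim W ->
  coercive W.
Proof.
move=> + + [n [v]]; elim: n W v => [|n IH] W v hW W_pos W_span.
  by exists 1 => // x /W_span [a ->]; rewrite big_ord0 !qform0 // mul1r.
pose v' j := v (lift ord0 j).
have [W_span'|] := boolp.pselect (forall x, W x -> in_span v' x); first exact: IH W_span'.
move=> /boolp.existsPNP [e We e_span'].
have e_neq0 : e != 0 by apply: contra_notN e_span' => /eqP ->; apply: in_span0.
have Be_gt0 := W_pos _ We e_neq0.
have Bee := hform_diag_neq0 BH Be_gt0.
apply: (coercive_of_coercive_kernel hW We Be_gt0).
have hM := subspace_kernel hW (fun a x y => BH.1 a x y e).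
apply: (IH _ (fun j => proj_orth e (v' j)) hM (fun x Mx => W_pos x Mx.1)) => m [Wm Bme].
have [b e_sum] := W_span e We; rewrite -(proj_orth_id Bme).
apply: (in_span_drop (b := b)) (W_span m Wm); first exact: proj_orth_linear.
  apply: contra_notN e_span' => /eqP b0; exists (fun j => b (lift ord0 j)).
  by rewrite e_sum big_ord_recl b0 scale0r add0r.
by rewrite -e_sum proj_orth_self.
Qed.

End Coercivity.

Definition cconverges {R : realType} (c : nat -> R[i]) (c0 : R[i]) : Prop :=
  vanishes (fun n => cnorm2 (c n - c0)).

Section InnerProduct.
Variables (R : realType) (V : lmodType R[i]) (ip : V -> V -> R[i]).
Hypothesis Hip : is_inner_product ip.

Lemma ip_hermitian : hermitian_form ip.
Proof. by case: Hip. Qed.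

Lemma ip_qform_gt0 x : x != 0 -> 0 < qform ip x.
Proof. by case: Hip => _ _ /[apply]; rewrite ltcE => /andP[]. Qed.

Let ipH := ip_hermitian.
Let ip_ge0 := qform_ip_ge0 ipH ip_qform_gt0.

Lemma hnorm_lt x d : 0 < d -> (hnorm ip x < d) = (qform ip x < d ^+ 2).
Proof.
by move=> d0; rewrite /hnorm -{1}(gtr0_norm d0) -sqrtr_sqr ltr_sqrt ?exprn_gt0.
Qed.

Lemma hnorm_sqr x : hnorm ip x ^+ 2 = qform ip x.
Proof. by rewrite /hnorm sqr_sqrtr ?ip_ge0. Qed.

Lemma hconvergesE u l : hconverges ip u l <-> qconverges ip u l.
Proof.
split=> cvg e e0.
  have [N hN] : exists N, forall n, (N <= n)%N -> hnorm ip (u n - l) < Num.sqrt e.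
    by apply: cvg; rewrite sqrtr_gt0.
  by exists N => n /hN; rewrite hnorm_lt ?sqrtr_gt0 // sqr_sqrtr // ltW.
by have [N hN] := cvg _ (exprn_gt0 2 e0); exists N => n /hN; rewrite hnorm_lt.
Qed.

Lemma hcauchyE u : hcauchy ip u <-> qcauchy ip u.
Proof.
split=> cau e e0.
  have [N hN] : exists N, forall m n, (N <= m)%N -> (N <= n)%N ->
      hnorm ip (u m - u n) < Num.sqrt e.
    by apply: cau; rewrite sqrtr_gt0.
  by exists N => m n /hN /[apply]; rewrite hnorm_lt ?sqrtr_gt0 // sqr_sqrtr // ltW.
by have [N hN] := cau _ (exprn_gt0 2 e0); exists N => m n /hN /[apply]; rewrite hnorm_lt.
Qed.

Lemma qconvergesB u v l m :
  qconverges ip u l -> qconverges ip v m -> qconverges ip (fun n => u n - v n) (l - m).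
Proof.
move=> ul vm; apply: (@vanishes_le _ _ (fun n => qform ip (u n - l) * 2 + qform ip (v n - m) * 2)).
  move=> n; have -> : u n - v n - (l - m) = (u n - l) + - (v n - m).
    by rewrite !opprB addrACA [RHS]addrACA [- l + _]addrC.
  by have := qform_ip_addle ipH ip_qform_gt0 (u n - l) (- (v n - m)); rewrite (qformN ipH); lra.
by apply: vanishesD; apply: vanishesMr.
Qed.

Lemma qconvergesZl (c : nat -> R[i]) c0 y :
  cconverges c c0 -> qconverges ip (fun n => c n *: y) (c0 *: y).
Proof.
move=> cvg; apply: (@vanishes_le _ _ (fun n => cnorm2 (c n - c0) * qform ip y)).
  by move=> n; rewrite -scalerBl (qformZ ipH).
exact: vanishesMr.
Qed.

Lemma closed_qcomplete (L : V -> Prop) :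
  (forall u, hcauchy ip u -> exists l, hconverges ip u l) ->
  is_closed_subspace ip L -> qcomplete ip L.
Proof.
move=> complete [_ L_closed] u Lu /hcauchyE /complete [l cvg].
by exists l; [exact: L_closed cvg | exact/hconvergesE].
Qed.

Lemma closed_subspaceI (W L : V -> Prop) :
  is_closed_subspace ip W -> is_closed_subspace ip L ->
  is_closed_subspace ip (fun x => W x /\ L x).
Proof.
move=> [[W0 W_lin] W_closed] [[L0 L_lin] L_closed]; split.
  by split=> // a x y [Wx Lx] [Wy Ly]; split; [apply: W_lin | apply: L_lin].
by move=> u l WLu cvg; split; [apply: W_closed cvg | apply: L_closed cvg] => n; case: (WLu n).
Qed.

Lemma cnorm2_ip_le x y : cnorm2 (ip x y) <= 2 * qform ip x * qform ip y.
Proof.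
have CS z : complex.Re (ip x z) ^+ 2 <= qform ip x * qform ip z.
  by apply: (qform_cauchy_schwarz ipH) => [r|]; apply: ip_ge0.
have := CS y; have := CS ('i *: y).
rewrite (Re_hform_iZr ipH) // (qformZ ipH) // /cnorm2 /=.
by rewrite expr0n expr1n /= add0r mul1r; lra.
Qed.

Lemma ip_continuous_l y : hcontinuous_fun ip (ip^~ y).
Proof.
move=> x e e0; set qy := qform ip y; have qy0 : 0 <= qy := ip_ge0 y.
have qy1 : 0 < qy + 1 by lra.
exists (e / (qy + 1)) => [|z]; first by rewrite divr_gt0.
rewrite hnorm_lt ?divr_gt0 // => near_z; rewrite -(hformBl ipH) // cabs_lt //.
apply: le_lt_trans (cnorm2_ip_le _ _) _.
have -> : e ^+ 2 = (e / (qy + 1)) ^+ 2 * (qy + 1) ^+ 2 by rewrite -exprMn mulfVK ?gt_eqF.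
have := ler_wpM2r qy0 (ltW near_z); have := exprn_gt0 2 (divr_gt0 e0 qy1).
move: (_ ^+ 2) (qform ip _) => d2 qw; nra.
Qed.

End InnerProduct.

Definition pform {R : realType} {V : lmodType R[i]} (s : V -> V -> R[i]) (x y : V) : R[i] :=
  - (iC * s x y).

Section Symplectic.
Variables (R : realType) (V : lmodType R[i]) (ip s : V -> V -> R[i]).
Hypotheses (Hhil : is_hilbert ip) (Hs : strong_symplectic ip s).

Let Hip : is_inner_product ip. Proof. by case: Hhil. Qed.
Let ip_complete : forall u, hcauchy ip u -> exists l, hconverges ip u l.
Proof. by case: Hhil. Qed.
Let ipH := ip_hermitian Hip.
Let ip_ge0 := qform_ip_ge0 ipH (ip_qform_gt0 Hip).

Lemma s_linear a x y z : s (a *: x + y) z = a * s x z + s y z.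
Proof. by case: Hs => -[]. Qed.

Lemma s0l z : s 0 z = 0.
Proof.
have := s_linear 1 0 0 z; rewrite scale1r addr0 mul1r => h.
by apply: (addrI (s 0 z)); rewrite -h addr0.
Qed.

Lemma s_skew x y : s y x = - Num.conj (s x y).
Proof. by case: Hs. Qed.

Lemma pform_hermitian : hermitian_form (pform s).
Proof.
split=> [a x y z|x y]; first by rewrite /pform s_linear; ring.
rewrite /pform s_skew; case: (s x y) => a b.
by rewrite /iC /=; apply/eqP; rewrite eq_complex /=; apply/andP; split; apply/eqP; ring.
Qed.

Let BH := pform_hermitian.

Lemma qform_pform x : qform (pform s) x = complex.Im (s x x).
Proof. by rewrite /qform /pform /iC; case: (s x x) => a b /=; ring. Qed.

Lemma pos_defE (L : V -> Prop) :
  pos_def s L <-> forall x, L x -> x != 0 -> 0 < qform (pform s) x.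
Proof.
split=> L_pos x Lx x_neq0.
  by have := L_pos x Lx x_neq0; rewrite -[- _]/(pform s x x) (hform_diag BH) ltcE => /andP[].
by rewrite -[- _]/(pform s x x) (hform_diag BH) ltcE /= eqxx L_pos.
Qed.

Lemma sperp_sym (L : V -> Prop) y l : sperp s L y -> L l -> s l y = 0.
Proof. by move=> Ly Ll; rewrite s_skew Ly // conjC0 oppr0. Qed.

Lemma sperp_span n (v : 'I_n -> V) x :
  (forall i, s x (v i) = 0) -> sperp s (in_span v) x.
Proof.
move=> xv _ [a ->]; apply/eqP; rewrite -conjC_eq0; apply/eqP.
pose g z : R[i]^o := Num.conj (s x z).
have g_lin c y z : g (c *: y + z) = c *: g y + g z.
  by rewrite /g; case: Hs => -[_ ->] _ _ _ _; rewrite rmorphD rmorphM /= conjCK.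
rewrite -[Num.conj _]/(g _) raw_linear_sum // big1 // => i _.
by rewrite /g xv conjC0 scaler0.
Qed.

Lemma s_cconverges u l y :
  qconverges ip u l -> cconverges (fun n => s (u n) y) (s l y).
Proof.
move=> cvg e e0; case: Hs => _ _ s_cont _ _.
have [d d0 near_d] : exists2 d, 0 < d & forall x' y', hnorm ip (x' - l) < d ->
    hnorm ip (y' - y) < d -> cabs (s x' y' - s l y) < Num.sqrt e.
  by apply: s_cont; rewrite sqrtr_gt0.
have [N hN] := cvg _ (exprn_gt0 2 d0); exists N => n /hN near_n.
have := near_d (u n) y; rewrite !(hnorm_lt ip) // subrr (qform0 ipH) exprn_gt0 //.
by rewrite cabs_lt ?sqrtr_gt0 // sqr_sqrtr ?ltW //; apply.
Qed.

Lemma pform_qconverges u l : qconverges ip u l -> qconverges (pform s) u l.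
Proof.
move=> cvg e e0; case: Hs => _ _ s_cont _ _.
have [d d0 near_d] := s_cont 0 0 e e0.
have [N hN] := cvg _ (exprn_gt0 2 d0); exists N => n /hN near_n.
have near_n' : hnorm ip (u n - l - 0) < d by rewrite subr0 (hnorm_lt ip).
rewrite qform_pform; apply: le_lt_trans (Im_le_cabs _) _.
by have := near_d _ _ near_n' near_n'; rewrite s0l subr0.
Qed.

Lemma closed_line_add (L : V -> Prop) y :
  is_closed_subspace ip L -> sperp s L y -> s y y != 0 ->
  is_closed_subspace ip (line_add L y).
Proof.
move=> [hL L_closed] Ly syy; split; first exact: subspace_line_add.
pose f x := s x y / s y y.
have f_coef l t : L l -> f (l + t *: y) = t.
  by move=> Ll; rewrite /f addrC s_linear (sperp_sym Ly Ll) addr0 mulfK.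
move=> u z L'u /hconvergesE u_cvg.
have Lu n : L (u n - f (u n) *: y).
  by have [l [t [Ll ->]]] := L'u n; rewrite f_coef // addrK.
have f_cvg : cconverges (fun n => f (u n)) (f z).
  apply: (@vanishes_le _ _ (fun n => cnorm2 (s (u n) y - s z y) * cnorm2 (s y y)^-1)).
    by move=> n; rewrite /f -mulrBl cnorm2M.
  exact: vanishesMr (cnorm2_ge0 _) (s_cconverges _ u_cvg).
exists (z - f z *: y), (f z); split; last by rewrite subrK.
apply: L_closed Lu _; apply/hconvergesE.
exact: (qconvergesB Hip (v := fun n => f (u n) *: y) u_cvg (qconvergesZl Hip y f_cvg)).
Qed.

Lemma pos_def_line_add (L : V -> Prop) y :
  pos_def s L -> sperp s L y -> 0 < qform (pform s) y -> pos_def s (line_add L y).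
Proof.
move=> /pos_defE L_pos Ly By_gt0; apply/pos_defE => _ [l [t [Ll ->]]] x_neq0.
have Bly : pform s l y = 0 by rewrite /pform (sperp_sym Ly Ll) mulr0 oppr0.
rewrite (qformD BH) (hformZr BH) Bly mulr0 /= mulr0 addr0 (qformZ BH).
have [t0|t_neq0] := eqVneq t 0.
  move: x_neq0; rewrite t0 scale0r addr0 /cnorm2 /= expr0n /= add0r mul0r addr0.
  exact: L_pos.
have Bl : 0 <= qform (pform s) l.
  by have [->|/L_pos-/(_ Ll)/ltW] := eqVneq l 0; rewrite ?(qform0 BH).
have : 0 < cnorm2 t.
  by rewrite lt_def cnorm2_ge0 andbT; apply: contra_neq t_neq0; exact: cnorm2_eq0.
by move=> /(mulr_gt0)/(_ By_gt0); lra.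
Qed.

Lemma pform_sperp_le0 (L : V -> Prop) y :
  max_pos_def ip s L -> sperp s L y -> qform (pform s) y <= 0.
Proof.
move=> [L_closed L_pos L_max] Ly; rewrite leNgt; apply/negP => By_gt0.
have syy : s y y != 0 by apply: contraTneq By_gt0 => syy0; rewrite qform_pform syy0 ltxx.
have Ly_y : L y.
  apply: (L_max _ (closed_line_add L_closed Ly syy) (pos_def_line_add L_pos Ly By_gt0)).
    by move=> x Lx; exists x, 0; rewrite scale0r addr0.
  by exists 0, 1; rewrite scale1r add0r; split=> //; exact: L_closed.1.1.
by move/eqP: syy; apply; apply: Ly.
Qed.

Lemma sperp_sperp_sub (L : V -> Prop) x :
  is_closed_subspace ip L -> sperp s (sperp s L) x -> L x.
Proof.
move=> L_closed x_perp.
have [p Lp p_orth] := orthogonal_projection ipH (x := x) L_closed.1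
  (fun k t _ => ip_ge0 _) (closed_qcomplete ip_complete L_closed).
set u := x - p in p_orth.
have [y u_y] : exists y, forall z, ip z u = s z y.
  by case: Hs => _ _ _ _; apply; [move=> a z w; exact: ipH.1 | exact: ip_continuous_l].
have y_perp : sperp s L y.
  by move=> l Ll; rewrite s_skew -u_y [ip l u]ipH.2 p_orth // !conjC0 oppr0.
have /eqP : u = 0.
  apply/eqP; apply: contraT => u_neq0; have := ip_qform_gt0 Hip u_neq0.
  rewrite /qform {1}/u (hformBl ipH) u_y x_perp // [ip p u]ipH.2 p_orth //.
  by rewrite conjC0 subrr ltxx.
by rewrite subr_eq0 => /eqP ->.
Qed.

Lemma coercive_qcomplete (K : V -> Prop) :
  is_closed_subspace ip K -> coercive ip (pform s) K -> qcomplete (pform s) K.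
Proof.
move=> K_closed [c c_gt0 K_coer] u Ku u_cau.
have [|l Kl u_cvg] := closed_qcomplete ip_complete K_closed Ku; last first.
  by exists l => //; apply: pform_qconverges.
move=> e e0; have [N hN] := u_cau _ (mulr_gt0 e0 c_gt0).
exists N => m n leNm leNn; rewrite -(ltr_pM2l c_gt0) [c * e]mulrC.
exact: le_lt_trans (K_coer _ (subspaceB K_closed.1 (Ku m) (Ku n))) (hN m n leNm leNn).
Qed.

Lemma finite_dim_of_sperp_span n (v : 'I_n -> V) (W : V -> Prop) :
  is_subspace W -> (forall x, W x -> sperp s (in_span v) x -> x = 0) -> finite_dim W.
Proof.
move=> hW W_inj; apply: (finite_dim_of_joint_kernel0 (f := fun i x => s x (v i))) hW _ _.
  by move=> i a x y; exact: s_linear.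
by move=> x Wx xv; apply: W_inj => //; exact: sperp_span.
Qed.

Lemma coercive_of_finite_dim_max_pos_def (L W : V -> Prop) :
  max_pos_def ip s L -> finite_dim L -> is_subspace W -> pos_def s W ->
  coercive ip (pform s) W.
Proof.
move=> L_max [n [v L_span]] hW /pos_defE W_pos.
apply: (coercive_of_finite_dim ipH BH (ip_qform_gt0 Hip) hW W_pos).
apply: (finite_dim_of_sperp_span (v := v)) hW _ => x Wx x_perp.
have B_le0 := pform_sperp_le0 L_max (fun l Ll => x_perp l (L_span l Ll)).
by apply/eqP; apply: contraLR B_le0 => /(W_pos _ Wx); rewrite -ltNge.
Qed.

Lemma coercive_of_finite_dim_sperp (L W : V -> Prop) :
  is_closed_subspace ip L -> coercive ip (pform s) L -> finite_dim (sperp s L) ->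
  is_closed_subspace ip W -> pos_def s W -> coercive ip (pform s) W.
Proof.
move=> L_closed [cL cL_gt0 L_coer] [n [v perp_span]] W_closed /pos_defE W_pos.
pose K x := W x /\ L x.
have K_closed : is_closed_subspace ip K := closed_subspaceI W_closed L_closed.
have K_coer : coercive ip (pform s) K by exists cL => // x [_ /L_coer].
have W_ge0 x : W x -> 0 <= qform (pform s) x.
  by move=> Wx; have [->|/(W_pos _ Wx)/ltW] := eqVneq x 0; rewrite ?(qform0 BH).
pose M x := W x /\ sperp (pform s) K x.
have M_coer : coercive ip (pform s) M.
  have hM : is_subspace M := subspace_sperp BH K W_closed.1.
  apply: (coercive_of_finite_dim ipH BH (ip_qform_gt0 Hip) hM (fun x Mx => W_pos x Mx.1)).
  apply: (finite_dim_of_sperp_span (v := v)) hM _ => x [Wx x_orth] x_perp.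
  have Lx : L x by apply: sperp_sperp_sub L_closed _ => y /perp_span; exact: x_perp.
  have Bx0 : qform (pform s) x = 0 by rewrite /qform x_orth.
  by apply/eqP; apply: contraTT (introT eqP Bx0) => /(W_pos _ Wx); rewrite lt0r => /andP[].
apply: (coercive_orthogonal_sum ipH BH (ip_qform_gt0 Hip) _ _ K_coer M_coer).
  have KW k : K k -> W k by case.
  have K_complete := coercive_qcomplete K_closed K_coer.
  by move=> w; exact: (orthogonal_decomposition BH W_closed.1 K_closed.1 KW W_ge0 K_complete).
by move=> k m Kk [_ m_orth]; rewrite BH.2 m_orth // conjC0.
Qed.

Lemma max_compl_pos_defE (L : V -> Prop) :
  max_compl_pos_def ip s L <-> max_pos_def ip s L /\ coercive ip (pform s) L.
Proof.
have coerE c x : (RtoC (c * hnorm ip x ^+ 2) <= - (iC * s x x)) =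
                 (c * qform ip x <= qform (pform s) x).
  by rewrite (hnorm_sqr Hip) -[- _]/(pform s x x) (hform_diag BH) /RtoC lecE /= eqxx.
by split=> -[L_max [c c_gt0 L_coer]]; split=> //; exists c => // x /L_coer; rewrite coerE.
Qed.

End Symplectic.

Theorem proposition2p12 (R : realType) (V : lmodType R[i])
  (ip : V -> V -> R[i]) (s : V -> V -> R[i]) (W : V -> Prop) :
  is_hilbert ip -> strong_symplectic ip s ->
  (exists L : V -> Prop, max_compl_pos_def ip s L /\
     (finite_dim L \/ finite_dim (sperp s L))) ->
  max_pos_def ip s W ->
  max_compl_pos_def ip s W.
Proof.
move=> Hhil Hs [L [/(max_compl_pos_defE Hhil Hs) [L_max L_coer] L_fin]] W_max.
apply/(max_compl_pos_defE Hhil Hs); split=> //.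
have [W_closed W_pos _] := W_max.
case: L_fin => [L_fin|perp_fin].
  exact: coercive_of_finite_dim_max_pos_def L_max L_fin W_closed.1 W_pos.
by case: L_max => L_closed _ _; exact: coercive_of_finite_dim_sperp L_coer perp_fin W_closed W_pos.
Qed.
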